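(* Let $\mathcal{C}$ be a category, $\mathcal{D}$ a full pro-reflective subcategory, $J$ a directed partially ordered set, $X\in Ob\,\mathcal{C}$, $Q\in Ob\,\mathcal{D}$, and $\boldsymbol{p}=(p_\lambda):X\to\boldsymbol{X}=(X_\lambda,p_{\lambda\lambda'},\Lambda)$ a $\mathcal{D}$-expansion. Let $(\varphi^j)_{j\in J}$ and $(\varphi'^j)_{j\in J}$ be families of $\mathcal{C}$-morphisms $X\to Q$ that uniformly factorize through $\boldsymbol{p}$ as $\varphi^j=f^jp_\lambda$ and $\varphi'^j=f'^jp_{\lambda'}$ (with $f^j:X_\lambda\to Q$, $f'^j:X_{\lambda'}\to Q$ in $\mathcal{D}$), and let $F,F':X\to Q$ be the $J$-shape morphisms they induce. Then $F=F'$ if and only if $(\varphi^j)$ and $(\varphi'^j)$ are almost equal, i.e. there exist $\lambda_0\ge\lambda,\lambda'$ and $j_0\in J$ such that $f^jp_{\lambda\lambda_0}=f'^jp_{\lambda'\lambda_0}$ for all $j\ge j_0$.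
   Context: An inverse system $(X_\lambda,p_{\lambda\lambda'},\Lambda)$: $\Lambda$ directed preordered, $p_{\lambda\lambda'}:X_{\lambda'}\to X_\lambda$ ($\lambda\le\lambda'$), $p_{\lambda\lambda}=1$, $p_{\lambda\lambda'}p_{\lambda'\lambda''}=p_{\lambda\lambda''}$. A $J$-morphism $(f,f^j_\mu):\boldsymbol{X}\to\boldsymbol{Y}=(Y_\mu,q_{\mu\mu'},M)$: $f:M\to\Lambda$ and $f^j_\mu:X_{f(\mu)}\to Y_\mu$ ($j\in J$) such that for all $\mu\le\mu'$ there exist $\lambda\ge f(\mu),f(\mu')$, $j_0$ with $f^{j'}_\mu p_{f(\mu)\lambda}=q_{\mu\mu'}f^{j'}_{\mu'}p_{f(\mu')\lambda}$ for $j'\ge j_0$; $(f,f^j_\mu)\sim(f',f'^j_\mu)$ iff for each $\mu$ there are $\lambda\ge f(\mu),f'(\mu)$, $j_0$ with $f^{j'}_\mu p_{f(\mu)\lambda}=f'^{j'}_\mu p_{f'(\mu)\lambda}$ for $j'\ge j_0$; $pro^J$-$\mathcal{D}$ is the quotient category. A morphism $\boldsymbol{X}\to(Q)$ into the one-term system is represented by an index $\lambda$ and a family $(f^j:X_\lambda\to Q)_{j}$. A $\mathcal{D}$-expansion: family $\boldsymbol{p}=(p_\lambda:X\to X_\lambda)$, $\boldsymbol{X}$ in $\mathcal{D}$, $p_{\lambda\lambda'}p_{\lambda'}=p_\lambda$, with (E1) every $h:X\to P$, $P\in Ob\,\mathcal{D}$, factors as $gp_\lambda$, (E2) $gp_\lambda=g'p_\lambda$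 implies $gp_{\lambda\lambda'}=g'p_{\lambda\lambda'}$ for some $\lambda'\ge\lambda$; pro-reflective: every object has one. $Sh^J_{(\mathcal{C},\mathcal{D})}$: objects of $\mathcal{C}$; morphisms $X\to Y$ are morphisms of $pro^J$-$\mathcal{D}$ between chosen $\mathcal{D}$-expansions, identified across choices via the canonical $pro$-$\mathcal{D}$ isomorphisms between expansions. A family $(\varphi^j:X\to Q)$ uniformly factorizes through $\boldsymbol{p}$ if there are a fixed $\lambda$ and $f^j:X_\lambda\to Q$ with $\varphi^j=f^jp_\lambda$ for all $j$; the induced $J$-shape morphism $X\to Q$ is the one represented, w.r.t. $\boldsymbol{p}$ and $1:Q\to(Q)$, by $[(f^j)]:\boldsymbol{X}\to(Q)$ with index $\lambda$. *)

Set Implicit Arguments.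
Unset Strict Implicit.

Record Category := {
  Ob : Type;
  Hom : Ob -> Ob -> Type;
  idm : forall A, Hom A A;
  comp : forall A B D, Hom B D -> Hom A B -> Hom A D;
  comp_id_l : forall A B (f : Hom A B), comp (idm B) f = f;
  comp_id_r : forall A B (f : Hom A B), comp f (idm A) = f;
  comp_assoc : forall A B C D (h : Hom C D) (g : Hom B C) (f : Hom A B),
      comp h (comp g f) = comp (comp h g) f
}.
Arguments idm {c} A.
Arguments comp {c A B D} _ _.

Record DirPoset := {
  dcar : Type;
  dle : dcar -> dcar -> Prop;
  dle_refl : forall a, dle a a;
  dle_trans : forall a b c, dle a b -> dle b c -> dle a c;
  dle_antisym : forall a b, dle a b -> dle b a -> a = b;
  dle_dir : forall a b, exists c, dle a c /\ dle b c;
  dle_ne : inhabited dcar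
}.

Record InvSys (C : Category) := {
  idx : Type;
  ile : idx -> idx -> Prop;
  ile_refl : forall a, ile a a;
  ile_trans : forall a b c, ile a b -> ile b c -> ile a c;
  ile_dir : forall a b, exists c, ile a c /\ ile b c;
  ile_ne : inhabited idx;
  obj : idx -> Ob C;
  bond : forall a b, ile a b -> Hom (obj b) (obj a);
  bond_id : forall a (h : ile a a), bond h = idm (obj a);
  bond_comp : forall a b c (h1 : ile a b) (h2 : ile b c) (h3 : ile a c),
      comp (bond h1) (bond h2) = bond h3
}.
Arguments ile {C} i _ _.
Arguments obj {C} i _.
Arguments bond {C i a b} _.

(* D is a full subcategory of C, given by a predicate on objects (fullness:
   D-morphisms between D-objects are all the C-morphisms). *)

Definition is_expansion (C : Category) (inD : Ob C -> Prop) (X : Ob C)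
    (S : InvSys C) (p : forall a, Hom X (obj S a)) : Prop :=
  (forall a, inD (obj S a)) /\
  (forall a b (h : ile S a b), comp (bond h) (p b) = p a) /\
  (forall P, inD P -> forall h : Hom X P,
      exists a (g : Hom (obj S a) P), h = comp g (p a)) /\
  (forall P, inD P -> forall a (g g' : Hom (obj S a) P),
      comp g (p a) = comp g' (p a) ->
      exists b (hab : ile S a b), comp g (bond hab) = comp g' (bond hab)).

Arguments is_expansion {C} inD X S p.

Definition pro_reflective (C : Category) (inD : Ob C -> Prop) : Prop :=
  forall X : Ob C, exists (S : InvSys C) (p : forall a, Hom X (obj S a)),
    is_expansion inD X S p.

Record JMorData (C : Category) (J : DirPoset) (S T : InvSys C) := {
  jidx : idx T -> idx S;
  jmap : dcar J -> forall m, Hom (obj S (jidx m)) (obj T m)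
}.
Arguments jidx {C J S T} _ _.
Arguments jmap {C J S T} _ _ _.

Definition is_jmor (C : Category) (J : DirPoset) (S T : InvSys C)
    (F : JMorData J S T) : Prop :=
  forall m m' (hm : ile T m m'),
    exists l (h1 : ile S (jidx F m) l) (h2 : ile S (jidx F m') l) (j0 : dcar J),
      forall j', dle j0 j' ->
        comp (jmap F j' m) (bond h1) = comp (comp (bond hm) (jmap F j' m')) (bond h2).

Arguments is_jmor {C J S T} F.

Definition jequiv (C : Category) (J : DirPoset) (S T : InvSys C)
    (F G : JMorData J S T) : Prop :=
  forall m, exists l (h1 : ile S (jidx F m) l) (h2 : ile S (jidx G m) l) (j0 : dcar J),
      forall j', dle j0 j' ->
        comp (jmap F j' m) (bond h1) = comp (jmap G j' m) (bond h2).

Arguments jequiv {C J S T} F G.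

Definition single (C : Category) (Q : Ob C) : InvSys C.
Proof.
  refine {| idx := unit; ile := fun _ _ => True; obj := fun _ => Q;
            bond := fun _ _ _ => idm Q |}.
  - intros; exact I.
  - intros; exact I.
  - intros a b; exists tt; split; exact I.
  - exact (inhabits tt).
  - intros; reflexivity.
  - intros; apply comp_id_l.
Defined.

Arguments single {C} Q.

Definition induced_rep (C : Category) (J : DirPoset) (Q : Ob C) (S : InvSys C)
    (lam : idx S) (f : dcar J -> Hom (obj S lam) Q) : JMorData J S (single Q) :=
  @Build_JMorData C J S (single Q) (fun _ => lam) (fun j _ => f j).

Arguments induced_rep {C} J Q S lam f.

(* A morphism of pro^J-D from S to (Q): the ~-class of a J-morphism,
   represented as the set of all J-morphisms equivalent to a representative. *)
Definition shape_class (C : Category) (J : DirPoset) (S T : InvSys C)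
    (r : JMorData J S T) : JMorData J S T -> Prop :=
  fun g => is_jmor g /\ jequiv g r.

Arguments shape_class {C J S T} r _.

(* The J-shape morphism X -> Q induced by a uniform factorization
   phi^j = f^j p_lam, represented w.r.t. the expansion p (with system S)
   and 1 : Q -> (Q). *)
Definition induced_shape (C : Category) (J : DirPoset) (Q : Ob C) (S : InvSys C)
    (lam : idx S) (f : dcar J -> Hom (obj S lam) Q) :
    JMorData J S (single Q) -> Prop :=
  shape_class (induced_rep J Q S lam f).
Arguments induced_shape {C} J Q S lam f _.

(* A J-shape morphism induced by a uniform factorization is the ~-class of a
   J-morphism into the one-term system (Q) with constant index.  Since ~ is
   an equivalence relation, two such classes coincide exactly when their
   representatives are ~-equivalent, and for representatives into (Q) this
   equivalence is literally the almost equality of (f^j) and (f'^j). *)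

From Stdlib Require Import FunctionalExtensionality PropExtensionality.

Set Implicit Arguments.
Unset Strict Implicit.

Section JEquivalence.

Variables (C : Category) (J : DirPoset) (S T : InvSys C).

Lemma jequiv_refl (F : JMorData J S T) : jequiv F F.
Proof.
  intros m. destruct (dle_ne J) as [j0].
  exists (jidx F m), (ile_refl (jidx F m)), (ile_refl (jidx F m)), j0.
  reflexivity.
Qed.

Lemma jequiv_sym (F G : JMorData J S T) : jequiv F G -> jequiv G F.
Proof.
  intros HFG m. destruct (HFG m) as [l [h1 [h2 [j0 H]]]].
  exists l, h2, h1, j0. intros j Hj. symmetry. exact (H j Hj).
Qed.

Lemma jequiv_trans (F G H : JMorData J S T) :
  jequiv F G -> jequiv G H -> jequiv F H.
Proof.
  intros HFG HGH m.
  destruct (HFG m) as [l1 [h1 [h2 [j1 E1]]]].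
  destruct (HGH m) as [l2 [k1 [k2 [j2 E2]]]].
  destruct (ile_dir l1 l2) as [l [u1 u2]].
  destruct (dle_dir j1 j2) as [j0 [v1 v2]].
  exists l, (ile_trans h1 u1), (ile_trans k2 u2), j0. intros j Hj.
  rewrite <- (bond_comp h1 u1 (ile_trans h1 u1)), comp_assoc.
  rewrite (E1 j (dle_trans v1 Hj)), <- comp_assoc.
  (* [bond_comp] identifies the two bonds of G's index into [l] (via l1 and via l2). *)
  rewrite (bond_comp h2 u1 (ile_trans k1 u2)).
  rewrite <- (bond_comp k1 u2 (ile_trans k1 u2)), comp_assoc.
  rewrite (E2 j (dle_trans v2 Hj)), <- comp_assoc.
  rewrite (bond_comp k2 u2 (ile_trans k2 u2)). reflexivity.
Qed.

Lemma shape_class_eq {r r' : JMorData J S T} :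
  is_jmor r -> (shape_class r = shape_class r' <-> jequiv r r').
Proof.
  intros Hr. split.
  - intros E.
    assert (Hin : shape_class r r) by (split; [exact Hr | apply jequiv_refl]).
    rewrite E in Hin. exact (proj2 Hin).
  - intros Hrr'. apply functional_extensionality. intros g.
    apply propositional_extensionality. unfold shape_class.
    split; intros [Hg Hgr]; split; try exact Hg.
    + exact (jequiv_trans Hgr Hrr').
    + exact (jequiv_trans Hgr (jequiv_sym Hrr')).
Qed.

End JEquivalence.

Section InducedRepresentatives.

Variables (C : Category) (J : DirPoset) (Q : Ob C) (S : InvSys C).

Lemma is_jmor_induced_rep (lam : idx S) (f : dcar J -> Hom (obj S lam) Q) :
  is_jmor (induced_rep J Q S lam f).
Proof.
  intros m m' hm. destruct (dle_ne J) as [j0].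
  exists lam, (ile_refl lam), (ile_refl lam), j0. intros j _.
  simpl. rewrite comp_id_l. reflexivity.
Qed.

Lemma jequiv_induced_rep (lam lam' : idx S)
    (f : dcar J -> Hom (obj S lam) Q) (f' : dcar J -> Hom (obj S lam') Q) :
  jequiv (induced_rep J Q S lam f) (induced_rep J Q S lam' f') <->
  exists (l0 : idx S) (h : ile S lam l0) (h' : ile S lam' l0) (j0 : dcar J),
    forall j, dle j0 j -> comp (f j) (bond h) = comp (f' j) (bond h').
Proof.
  split.
  - intros E. exact (E tt).
  - intros Hae m. exact Hae.
Qed.

End InducedRepresentatives.

Theorem lemma8 (C : Category) (inD : Ob C -> Prop) (J : DirPoset)
    (X Q : Ob C) (S : InvSys C) (p : forall a, Hom X (obj S a))
    (HD : pro_reflective inD) (HQ : inD Q) (Hp : is_expansion inD X S p)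
    (phi phi' : dcar J -> Hom X Q) (lam lam' : idx S)
    (f : dcar J -> Hom (obj S lam) Q) (f' : dcar J -> Hom (obj S lam') Q)
    (Hf : forall j, phi j = comp (f j) (p lam))
    (Hf' : forall j, phi' j = comp (f' j) (p lam')) :
  induced_shape J Q S lam f = induced_shape J Q S lam' f' <->
  exists (l0 : idx S) (h : ile S lam l0) (h' : ile S lam' l0) (j0 : dcar J),
    forall j, dle j0 j -> comp (f j) (bond h) = comp (f' j) (bond h').
Proof.
  unfold induced_shape.
  rewrite (shape_class_eq (is_jmor_induced_rep f)).
  apply jequiv_induced_rep.
Qed.
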